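(* Let $d$ be a positive integer and let $w,v$ be type sequences each having $r$ occurrences of `$+$' and $c$ occurrences of `$-$'. Let $T$ be a skew $d$-semistandard $w$-oscillating tableau and $P$ a skew $d$-semistandard $v$-oscillating tableau that correspond under the oscillating skew $d$-RSK correspondence, i.e. there is a skew $d$-RSK growth diagram on $[0,r]\times[0,c]$ whose $d$-staircases along $\mathcal{P}^w$ form $T$ and along $\mathcal{P}^v$ form $P$. Then: (i) $T$ and $P$ have the same inner shape and the same outer shape; (ii) $\mathrm{wt}^+(T)=\mathrm{wt}^+(P)$ and $\mathrm{wt}^-(T)=\mathrm{wt}^-(P)$; (iii) $\mathrm{MCW}_d(T)=\mathrm{MCW}_d(P)$; (iv) the reversals $T^{\mathrm{rev}}$ and $P^{\mathrm{rev}}$ correspond to each other under the oscillating skew $d$-RSK correspondence (as tableaux of types $w^*$ and $v^*$, where $u^*$ denotes $u$ reversed with `$+$' and `$-$' interchanged).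
   Context: A $d$-staircase is an integer sequence $\lambda=(\lambda_1\ge\cdots\ge\lambda_d)$ (entries may be negative), $|\lambda|=\sum\lambda_i$. $\alpha\prec\beta$ (also $\beta\succ\alpha$) means $\beta_1\ge\alpha_1\ge\beta_2\ge\cdots\ge\beta_d\ge\alpha_d$; in that case $\mathrm{MCW}_d(\alpha,\beta)=\mathrm{MCW}_d(\beta,\alpha)=\beta_1-\alpha_d$. For $w=w_1\cdots w_k$, a skew $d$-semistandard $w$-oscillating tableau is a sequence of $d$-staircases $T=(\lambda^{(0)},\ldots,\lambda^{(k)})$ with $\lambda^{(i-1)}\prec\lambda^{(i)}$ if $w_i=+$ and $\lambda^{(i-1)}\succ\lambda^{(i)}$ if $w_i=-$; its inner shape is $\lambda^{(0)}$ and outer shape $\lambda^{(k)}$; $\mathrm{MCW}_d(T)=\max_i\mathrm{MCW}_d(\lambda^{(i-1)},\lambda^{(i)})$; $\mathrm{wt}^+(T)_i=|\lambda^{(a_i)}|-|\lambda^{(a_i-1)}|$ with $a_i$ the index of the $i$-th `$+$' in $w$, and $\mathrm{wt}^-(T)_i=|\lambda^{(b_i-1)}|-|\lambda^{(b_i)}|$ with $b_i$ the index of the $i$-th-to-last `$-$' in $w$. Its reversal $T^{\mathrm{rev}}=(\lambda^{(k)},\ldots,\lambda^{(0)})$ is a skew $d$-semistandard $w^*$-oscillating tableau. For a type sequence $u$ with $r$ `$+$'s and $c$ `$-$'s, $\mathcal{P}^u$ is the lattice path from $(r,0)$ to $(0,c)$ with an up step for each `$+$' and left step for each `$-$' in order.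 A skew $d$-RSK growth diagram on $[0,r]\times[0,c]$ assigns a $d$-staircase to each lattice point (no boundary condition; all cell entries $0$) such that each unit cell with bottom-left, top-left, bottom-right, top-right corners $\kappa,\mu,\nu,\rho$ satisfies $\mu\succ\kappa\prec\nu$, $\mu\prec\rho\succ\nu$, $\rho_1+\kappa_d=\min(\mu_d,\nu_d)+\max(\mu_1,\nu_1)$, $\rho_i+\kappa_{i-1}=\min(\mu_{i-1},\nu_{i-1})+\max(\mu_i,\nu_i)$ ($2\le i\le d$). Any skew $d$-semistandard $u$-oscillating tableau placed along $\mathcal{P}^u$ extends uniquely to such a diagram; the oscillating skew $d$-RSK correspondence sends $T$ to the sequence read along $\mathcal{P}^v$ in that diagram. *)

From mathcomp Require Import all_boot all_order all_algebra.
Set Implicit Arguments. Unset Strict Implicit. Unset Printing Implicit Defensive.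
Import Order.TTheory GRing.Theory Num.Theory.
Local Open Scope ring_scope.

(* A d-staircase is a sequence of d integers lam = [lam_1; ...; lam_d]
   (0-based: lam`_0 ... lam`_(d-1)), weakly decreasing. *)
Definition staircase (d : nat) (lam : seq int) : bool :=
  (size lam == d) && all (fun i => lam`_i.+1 <= lam`_i) (iota 0 d.-1).

Definition sizez (lam : seq int) : int := \sum_(x <- lam) x.

Definition interl (d : nat) (a b : seq int) : bool :=
  all (fun i => a`_i <= b`_i) (iota 0 d) &&
  all (fun i => b`_i.+1 <= a`_i) (iota 0 d.-1).

(* Type sequences: true = '+', false = '-'. *)
Definition tseq := seq bool.

Definition star (u : tseq) : tseq := rev (map negb u).

(* Skew d-semistandard w-oscillating tableau, as the sequence
   [lam^(0); ...; lam^(k)] *)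
Definition osc_tableau (d : nat) (w : tseq) (T : seq (seq int)) : bool :=
  (size T == (size w).+1) && all (staircase d) T &&
  all (fun i => if nth true w i then interl d (nth [::] T i) (nth [::] T i.+1)
                else interl d (nth [::] T i.+1) (nth [::] T i))
      (iota 0 (size w)).

Definition inner_shape (T : seq (seq int)) : seq int := head [::] T.
Definition outer_shape (T : seq (seq int)) : seq int := last [::] T.

Definition wt_plus (w : tseq) (T : seq (seq int)) : seq int :=
  [seq sizez (nth [::] T i.+1) - sizez (nth [::] T i)
  | i <- iota 0 (size w) & nth true w i].

Definition wt_minus (w : tseq) (T : seq (seq int)) : seq int :=
  rev [seq sizez (nth [::] T i) - sizez (nth [::] T i.+1)
      | i <- iota 0 (size w) & ~~ nth true w i].

Definition mcw_pair (d : nat) (a b : seq int) : int := b`_0 - a`_(d.-1).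

(* MCW_d(T): maximum over steps (the step with w_i = + has lam^(i-1) ≺ lam^(i),
   the step with w_i = - has lam^(i) ≺ lam^(i-1)); all these values are >= 0,
   so 0 is used as the value of the empty maximum. *)
Definition mcw (d : nat) (w : tseq) (T : seq (seq int)) : int :=
  foldr Num.max 0
    [seq (if nth true w i then mcw_pair d (nth [::] T i) (nth [::] T i.+1)
          else mcw_pair d (nth [::] T i.+1) (nth [::] T i))
    | i <- iota 0 (size w)].

(* Growth diagram: g x y is the staircase at lattice point (x,y), x horizontal
   in [0, c] (c = number of '-'), y vertical in [0, r] (r = number of '+'). *)
Definition cell_ok (d : nat) (ka mu nu rho : seq int) : Prop :=
  [/\ interl d ka mu /\ interl d ka nu, interl d mu rho /\ interl d nu rho,
      rho`_0 + ka`_(d.-1) = Num.min mu`_(d.-1) nu`_(d.-1) + Num.max mu`_0 nu`_0 &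
      forall i, (1 <= i < d)%N ->
        rho`_i + ka`_(i.-1) = Num.min mu`_(i.-1) nu`_(i.-1) + Num.max mu`_i nu`_i].

Definition growth_diagram (d r c : nat) (g : nat -> nat -> seq int) : Prop :=
  (forall x y, (x <= c)%N -> (y <= r)%N -> staircase d (g x y)) /\
  (forall x y, (x < c)%N -> (y < r)%N ->
     cell_ok d (g x y) (g x y.+1) (g x.+1 y) (g x.+1 y.+1)).

Definition path_step (b : bool) (p : nat * nat) : nat * nat :=
  if b then (p.1, p.2.+1) else (p.1.-1, p.2).

Fixpoint path_from (p : nat * nat) (u : tseq) : seq (nat * nat) :=
  p :: (if u is b :: u' then path_from (path_step b p) u' else [::]).

(* P^u starts at (c, 0), c = number of '-' in u, and ends at (0, r). *)
Definition lattice_path (u : tseq) : seq (nat * nat) :=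
  path_from (count negb u, 0%N) u.

Definition read_along (g : nat -> nat -> seq int) (u : tseq) : seq (seq int) :=
  [seq g p.1 p.2 | p <- lattice_path u].

Definition rsk_corr (d : nat) (w v : tseq) (T P : seq (seq int)) : Prop :=
  exists g, growth_diagram d (count id w) (count negb w) g /\
            read_along g w = T /\ read_along g v = P.

From mathcomp Require Import all_boot all_order all_algebra zify.

Set Implicit Arguments.
Unset Strict Implicit.
Unset Printing Implicit Defensive.

Import Order.TTheory GRing.Theory Num.Theory.
Local Open Scope ring_scope.

(* Everything is read off one growth diagram g.  The local rule of a cell
   forces |rho| + |kappa| = |mu| + |nu|, so the size increment of a vertical
   (horizontal) edge depends only on its row (column): every lattice path
   crosses the rows bottom to top, and the columns right to left, which gives
   the weights.  The first local equation rho_1 + kappa_d = min + max says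
   that going up-then-left around a cell and left-then-up give the same
   maximal MCW, so the MCW read along a path is invariant under flipping a
   corner, hence equal for all paths.  Finally the transpose of g is again a
   growth diagram (the local rule is symmetric in mu and nu), and reading it
   along P^{u*} is reading g backwards along P^u. *)

Lemma mcw_cons d b u t0 T :
  mcw d (b :: u) (t0 :: T) =
  Num.max (if b then mcw_pair d t0 (inner_shape T) else mcw_pair d (inner_shape T) t0)
          (mcw d u T).
Proof.
rewrite /mcw /=; congr (Num.max _ (foldr _ _ _)).
by rewrite -[1%N]/(1 + 0)%N iotaDl -map_comp; apply: eq_map => i /=; rewrite add1n.
Qed.

Lemma wt_plus_cons b u t0 T :
  wt_plus (b :: u) (t0 :: T) =
  if b then (sizez (inner_shape T) - sizez t0) :: wt_plus u T else wt_plus u T.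
Proof.
rewrite /wt_plus /= -[1%N]/(1 + 0)%N iotaDl filter_map.
rewrite (@eq_filter _ _ (nth true u)) //.
by case: b => /=; rewrite -map_comp; [congr cons|]; apply: eq_map.
Qed.

Lemma wt_minus_cons b u t0 T :
  wt_minus (b :: u) (t0 :: T) =
  if b then wt_minus u T else rcons (wt_minus u T) (sizez t0 - sizez (inner_shape T)).
Proof.
rewrite /wt_minus /= -[1%N]/(1 + 0)%N iotaDl filter_map.
rewrite (@eq_filter _ _ (fun i => ~~ nth true u i)) //.
by case: b => /=; rewrite -map_comp ?rev_cons; [|congr rcons]; congr rev; apply: eq_map.
Qed.

Definition path_end (p : nat * nat) (u : tseq) : nat * nat :=
  foldl (fun q b => path_step b q) p u.

Lemma path_endE p u : path_end p u = (p.1 - count negb u, p.2 + count id u)%N.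
Proof.
elim: u p => [|b u IHu] [x y] /=; first by rewrite subn0 addn0.
by rewrite /path_end /= -/(path_end _ u) IHu; case: b => /=; congr (_, _); lia.
Qed.

Lemma path_from_rcons p u b :
  path_from p (rcons u b) = rcons (path_from p u) (path_step b (path_end p u)).
Proof. by elim: u p => [|a u IHu] p //=; rewrite IHu. Qed.

Lemma last_path_from q p u : last q (path_from p u) = path_end p u.
Proof. by elim: u p q => [|b u IHu] p q //=. Qed.

Lemma star_rcons u b : star (rcons u b) = ~~ b :: star u.
Proof. by rewrite /star map_rcons rev_rcons. Qed.

Lemma count_id_star u : count id (star u) = count negb u.
Proof. by rewrite /star count_rev count_map. Qed.

Lemma count_negb_star u : count negb (star u) = count id u.
Proof. by rewrite /star count_rev count_map; apply: eq_count => b /=; rewrite negbK. Qed.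

Lemma rev_path_from p u : (count negb u <= p.1)%N ->
  rev (path_from p u) = map swap_pair (path_from (swap_pair (path_end p u)) (star u)).
Proof.
elim/last_ind: u => [|u b IHu]; first by case: p.
rewrite -cats1 count_cat cats1 => lepu.
rewrite path_from_rcons rev_rcons star_rcons /path_end foldl_rcons -/(path_end p u) /=.
have -> : path_step (~~ b) (swap_pair (path_step b (path_end p u))) =
          swap_pair (path_end p u).
  by rewrite path_endE; case: b lepu => /= lepu; congr (_, _) => /=; lia.
by rewrite -IHu; [case: (path_step b (path_end p u))|lia].
Qed.

Lemma sizez_nth (s : seq int) : sizez s = \sum_(i < size s) s`_i.
Proof. by rewrite /sizez (big_nth 0) big_mkord. Qed.

Lemma big_ord_shift_split n (x y : nat -> int) :
  \sum_(i < n.+1) x i + \sum_(i < n.+1) y i = x 0%N + y n + \sum_(i < n) (x i.+1 + y i).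
Proof.
rewrite big_ord_recl big_ord_recr big_split /=.
by rewrite -/(\sum_(i < n) x i.+1); lia.
Qed.

Lemma cell_ok_sizez d ka mu nu rho :
  size ka = d -> size mu = d -> size nu = d -> size rho = d ->
  cell_ok d ka mu nu rho -> sizez rho + sizez ka = sizez mu + sizez nu.
Proof.
move=> Ska Smu Snu Srho [_ _ cell_first cell_next].
rewrite !sizez_nth Ska Smu Snu Srho; case: d {Ska Smu Snu Srho} cell_first cell_next.
  by rewrite !big_ord0.
move=> n /= cell_first cell_next.
(* Summed up, the local equations pair min-term i with max-term i+1 cyclically. *)
rewrite big_ord_shift_split cell_first [Num.min _ _ + _]addrC.
rewrite (eq_bigr (fun i : 'I_n => Num.max mu`_i.+1 nu`_i.+1 + Num.min mu`_i nu`_i)).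
  have := big_ord_shift_split n (fun i => Num.max mu`_i nu`_i) (fun i => Num.min mu`_i nu`_i).
  move=> /= <-; rewrite addrC -!big_split.
  by apply: eq_bigr => i _ /=; rewrite addr_min_max.
by move=> i _; rewrite [RHS]addrC; apply: cell_next; rewrite !ltnS ltn_ord.
Qed.

Lemma cell_ok_sym d ka mu nu rho : cell_ok d ka mu nu rho -> cell_ok d ka nu mu rho.
Proof.
case=> [[kamu kanu] [murho nurho] cell_first cell_next].
split=> [//|//||i /cell_next]; by rewrite minC maxC.
Qed.

Lemma cell_ok_mcw d ka mu nu rho : cell_ok d ka mu nu rho ->
  Num.max (mcw_pair d nu rho) (mcw_pair d mu rho) =
  Num.max (mcw_pair d ka nu) (mcw_pair d ka mu).
Proof. by case=> _ _ cell_first _; rewrite /mcw_pair; lia. Qed.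

Lemma staircase_size d lam : staircase d lam -> size lam = d.
Proof. by case/andP => /eqP. Qed.

Definition read_from (g : nat -> nat -> seq int) p u := [seq g q.1 q.2 | q <- path_from p u].

Lemma inner_shape_read g p u : inner_shape (read_from g p u) = g p.1 p.2.
Proof. by case: u. Qed.

Lemma outer_shape_read g p u :
  outer_shape (read_from g p u) = g (path_end p u).1 (path_end p u).2.
Proof.
rewrite /outer_shape /read_from; case: u => [|b u] //=.
by rewrite (last_map (fun q => g q.1 q.2)) last_path_from.
Qed.

Definition in_grid (r c : nat) (p : nat * nat) (u : tseq) : bool :=
  [&& count negb u <= p.1, p.1 <= c & p.2 + count id u <= r]%N.

Lemma in_grid_step r c b p u : in_grid r c p (b :: u) -> in_grid r c (path_step b p) u.
Proof. by case: b p => -[x y] /and3P[/= ? ? ?]; apply/and3P; split=> /=; lia. Qed.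

Section GrowthDiagram.

Variables (d r c : nat) (g : nat -> nat -> seq int).
Hypothesis gd : growth_diagram d r c g.

Lemma growth_cell_sizez x y : (x < c)%N -> (y < r)%N ->
  sizez (g x.+1 y.+1) + sizez (g x y) = sizez (g x y.+1) + sizez (g x.+1 y).
Proof.
case: gd => stair cell lt_xc lt_yr.
by apply: cell_ok_sizez (cell x y lt_xc lt_yr); apply/staircase_size/stair; lia.
Qed.

Definition up_increment y := sizez (g 0 y.+1) - sizez (g 0 y).
Definition left_increment x := sizez (g x.+1 0) - sizez (g x 0).

Lemma up_increment_const x y : (x <= c)%N -> (y < r)%N ->
  sizez (g x y.+1) - sizez (g x y) = up_increment y.
Proof.
elim: x => [//|x IHx] le_xc lt_yr.
have := growth_cell_sizez le_xc lt_yr; rewrite -IHx ?(ltnW le_xc) //; lia.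
Qed.

Lemma left_increment_const x y : (x < c)%N -> (y <= r)%N ->
  sizez (g x.+1 y) - sizez (g x y) = left_increment x.
Proof.
elim: y => [//|y IHy] lt_xc le_yr.
have := growth_cell_sizez lt_xc le_yr; rewrite -IHy ?(ltnW le_yr) //; lia.
Qed.

Lemma wt_plus_read p u : in_grid r c p u ->
  wt_plus u (read_from g p u) = map up_increment (iota p.2 (count id u)).
Proof.
elim: u p => [|b u IHu] [x y] // grid.
rewrite wt_plus_cons inner_shape_read (IHu _ (in_grid_step grid)).
case: b grid => /and3P[/= ? ? ?] //; rewrite up_increment_const //; lia.
Qed.

Lemma wt_minus_read p u : in_grid r c p u ->
  wt_minus u (read_from g p u) =
  map left_increment (iota (p.1 - count negb u) (count negb u)).
Proof.
elim: u p => [|b u IHu] [x y] // grid.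
rewrite wt_minus_cons inner_shape_read (IHu _ (in_grid_step grid)).
case: b grid => /and3P[/= le_ux le_xc le_yr] //.
case: x le_ux le_xc => [|x] le_ux le_xc; first lia.
rewrite left_increment_const; [|lia|lia].
rewrite -map_rcons subSS add0n.
rewrite -[RHS]/(map left_increment (iota (x - count negb u) (count negb u).+1)).
by rewrite -[(count negb u).+1]addn1 iotaD subnK ?cats1 //; lia.
Qed.

Definition step_mcw (b : bool) (p : nat * nat) : int :=
  if b then mcw_pair d (g p.1 p.2) (g p.1 p.2.+1)
  else mcw_pair d (g p.1.-1 p.2) (g p.1 p.2).

Fixpoint path_mcw (u : tseq) (p : nat * nat) : int :=
  if u is b :: u' then Num.max (step_mcw b p) (path_mcw u' (path_step b p)) else 0.

Lemma mcw_read p u : mcw d u (read_from g p u) = path_mcw u p.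
Proof.
elim: u p => [|b u IHu] p //.
by rewrite [read_from _ _ _]/= mcw_cons inner_shape_read IHu; case: b.
Qed.

Lemma path_mcw_up_lefts k s x y : (k <= x <= c)%N -> (y < r)%N ->
  path_mcw (true :: nseq k false ++ s) (x, y) = path_mcw (nseq k false ++ true :: s) (x, y).
Proof.
elim: k x => [//|k IHk] [//|x] /andP[le_kx lt_xc] lt_yr.
rewrite [RHS]/= -IHk; [|lia|by []].
by rewrite /= /step_mcw /= !maxA (cell_ok_mcw (gd.2 x y lt_xc lt_yr)).
Qed.

Lemma path_mcw_lefts_ups p u : in_grid r c p u ->
  path_mcw u p = path_mcw (nseq (count negb u) false ++ nseq (count id u) true) p.
Proof.
elim: u p => [|b u IHu] [x y] //= grid.
rewrite (IHu _ (in_grid_step grid)).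
case: b grid => /and3P[/= le_ux le_xc le_yr] //.
by rewrite -path_mcw_up_lefts ?add0n; [|lia|lia].
Qed.

End GrowthDiagram.

Lemma growth_diagram_transpose d r c g :
  growth_diagram d r c g -> growth_diagram d c r (fun x y => g y x).
Proof. by case=> stair cell; split=> x y *; [apply: stair | apply/cell_ok_sym/cell]. Qed.

Lemma read_along_star g u :
  read_along (fun x y => g y x) (star u) = rev (read_along g u).
Proof.
rewrite /read_along /lattice_path count_negb_star -map_rev rev_path_from //.
by rewrite path_endE /= subnn add0n -map_comp.
Qed.

Theorem theorem7p2 (d : nat) (w v : tseq) (T P : seq (seq int)) :
  (0 < d)%N ->
  count id w = count id v -> count negb w = count negb v ->
  osc_tableau d w T -> osc_tableau d v P ->
  rsk_corr d w v T P ->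
  [/\ inner_shape T = inner_shape P /\ outer_shape T = outer_shape P,
      wt_plus w T = wt_plus v P /\ wt_minus w T = wt_minus v P,
      mcw d w T = mcw d v P &
      rsk_corr d (star w) (star v) (rev T) (rev P)].
Proof.
move=> _ r_eq c_eq _ _ [g [gd [<- <-]]].
have grid_w : in_grid (count id w) (count negb w) (count negb w, 0%N) w.
  by rewrite /in_grid /= !leqnn.
have grid_v : in_grid (count id w) (count negb w) (count negb v, 0%N) v.
  by rewrite /in_grid /= r_eq c_eq !leqnn.
rewrite /read_along /lattice_path -!/(read_from g _ _).
split.
- by rewrite !inner_shape_read !outer_shape_read !path_endE /= !subnn r_eq c_eq.
- by rewrite !(wt_plus_read gd) // !(wt_minus_read gd) //= !subnn r_eq c_eq.
- by rewrite !mcw_read (path_mcw_lefts_ups gd grid_w) (path_mcw_lefts_ups gd grid_v) r_eq c_eq.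
- exists (fun x y => g y x); rewrite !read_along_star count_id_star count_negb_star.
  by split; first exact: growth_diagram_transpose.
Qed.
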